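(* Let $g(t)=\sum_{n\ge0}g_nt^n$ be a rational function regular for $|t|<1$ having a pole at $t=1$ whose order is maximal among the orders of the poles of $g$. Let $p(t),q(t)$ be polynomials with $q(1)\ne0$, and let $s(t)=p(t)g(t)=\sum_ns_nt^n$ and $d(t)=q(t)g(t)=\sum_nd_nt^n$. Then the limits $$\lim_{t\to1^-}\frac{s(t)}{d(t)},\qquad\lim_{N\to\infty}\frac{\sum_{n\le N}s_n}{\sum_{n\le N}d_n}$$ both exist and equal $p(1)/q(1)$. *)

From HB Require Import structures.
From mathcomp Require Import all_boot all_order all_algebra.
From mathcomp Require Import all_classical all_reals all_analysis.
From mathcomp Require Import complex.
Set Implicit Arguments. Unset Strict Implicit. Unset Printing Implicit Defensive.
Import Order.TTheory GRing.Theory Num.Theory.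
Import numFieldNormedType.Exports.
Local Open Scope ring_scope.

(* Convolution coefficient of a polynomial with a sequence:
   the n-th coefficient of the formal power series  a(t) * (sum_k c_k t^k). *)
Definition pconv (R : ringType) (a : {poly R}) (c : nat -> R) (n : nat) : R :=
  \sum_(k < n.+1) a`_k * c (n - k)%N.

(* [c] is the sequence of Taylor coefficients at 0 of the rational function
   P/Q (with Q(0) <> 0), i.e. Q(t) * (sum_n c_n t^n) = P(t) as formal power
   series. *)
Definition taylor_coefs (R : ringType) (P Q : {poly R}) (c : nat -> R) : Prop :=
  forall n, pconv Q c n = P`_n.

From HB Require Import structures.
From mathcomp Require Import all_boot all_order all_algebra.
From mathcomp Require Import all_classical all_reals all_analysis.
From mathcomp Require Import complex.
From mathcomp Require Import zify ring.
Import Order.TTheory GRing.Theory Num.Theory.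
Import numFieldNormedType.Exports.
Local Open Scope ring_scope.
Set Implicit Arguments. Unset Strict Implicit. Unset Printing Implicit Defensive.

(* Write Q = W (1 - t)^(m+1) with W(1) <> 0.  The partial sums of (g_n) are the
   coefficients of g / (1 - t); subtracting al / (1 - t)^(m+2), al = P(1) / W(1),
   cancels the top-order pole at 1 and leaves a series x such that Q x is a
   polynomial.  All roots of Q have modulus >= 1 and multiplicity <= m + 1, so
   x_n = O(n^m): splitting Q into coprime root factors by Bezout, a factor
   (t - z)^j with |z| >= 1 costs at most n^(j-1).  Hence for every polynomial q,
   sum_(n <= N) (q g)_n = al q(1) C(N+m+1, m+1) + O(N^m), and the binomial grows
   like N^(m+1), which gives the limit p(1)/q(1) of the ratio of partial sums.
   The limit as t -> 1^- is immediate: s/d = p/q wherever g does not vanish. *)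

Section Convolution.
Variable R : nzRingType.
Implicit Types (a b : {poly R}) (c w : nat -> R).

Lemma pconv_polyE a c n i : (i <= n)%N -> pconv a c i = (a * \poly_(k < n.+1) c k)`_i.
Proof.
move=> le_in; rewrite /pconv coefM; apply: eq_bigr => k _.
by rewrite coef_poly ltnS (leq_trans (leq_subr _ _) le_in).
Qed.

Lemma eq_pconv a c w n : (forall i, (i <= n)%N -> c i = w i) -> pconv a c n = pconv a w n.
Proof. by move=> eq_cw; apply: eq_bigr => k _; rewrite eq_cw ?leq_subr. Qed.

Lemma pconv_coef a b n : pconv a (fun i => b`_i) n = (a * b)`_n.
Proof. by rewrite /pconv coefM. Qed.

Lemma pconvM a b c n : pconv (a * b) c n = pconv a (pconv b c) n.
Proof.
rewrite (pconv_polyE _ _ (leqnn n)) -mulrA -pconv_coef.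
by apply: eq_bigr => k _; rewrite (pconv_polyE _ _ (leq_subr k n)).
Qed.

Lemma pconvD a b c n : pconv (a + b) c n = pconv a c n + pconv b c n.
Proof. by rewrite !(pconv_polyE _ _ (leqnn n)) mulrDl coefD. Qed.

Lemma pconvB a b c n : pconv (a - b) c n = pconv a c n - pconv b c n.
Proof. by rewrite !(pconv_polyE _ _ (leqnn n)) mulrBl coefB. Qed.

Lemma pconvC k c n : pconv k%:P c n = k * c n.
Proof. by rewrite (pconv_polyE _ _ (leqnn n)) coefCM coef_poly ltnSn. Qed.

Lemma pconv1 c n : pconv 1 c n = c n.
Proof. by rewrite pconvC mul1r. Qed.

Lemma pconvX c n : pconv 'X c n = if n is n'.+1 then c n' else 0.
Proof.
rewrite (pconv_polyE _ _ (leqnn n)) coefXM; case: n => //= n.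
by rewrite coef_poly ltnS leqnSn.
Qed.

Lemma pconv_seqD a c w n : pconv a (fun i => c i + w i) n = pconv a c n + pconv a w n.
Proof. by rewrite /pconv -big_split; apply: eq_bigr => k _; rewrite mulrDr. Qed.

Lemma pconv_seqB a c w n : pconv a (fun i => c i - w i) n = pconv a c n - pconv a w n.
Proof. by rewrite /pconv -sumrB; apply: eq_bigr => k _; rewrite mulrBr. Qed.

End Convolution.

Lemma pconv_seqZ (R : comNzRingType) (a : {poly R}) k c n :
  pconv a (fun i => k * c i) n = k * pconv a c n.
Proof. by rewrite /pconv mulr_sumr; apply: eq_bigr => i _; rewrite mulrCA. Qed.

Section Growth.
Variable C : numDomainType.
Implicit Types (a A : {poly C}) (c w : nat -> C).

Definition pow_bounded c k := exists2 K : C, 0 <= K & forall n, `|c n| <= K * n.+1%:R ^+ k.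

Definition l1norm a : C := \sum_(i < size a) `|a`_i|.

Lemma sum_norm_coef_le a n : \sum_(i < n) `|a`_i| <= l1norm a.
Proof.
rewrite /l1norm -!(big_mkord xpredT (fun i => `|a`_i|)).
have [le_n_sz | lt_sz_n] := leqP n (size a).
  by rewrite (big_cat_nat (leq0n n) le_n_sz) /= lerDl sumr_ge0.
rewrite (big_cat_nat (leq0n _) (ltnW lt_sz_n)) /= [X in _ + X]big_nat_cond.
rewrite [X in _ + X]big1 ?addr0 //.
by move=> i /andP[/andP[le_sz_i _] _]; rewrite nth_default ?normr0.
Qed.

Lemma ler_natS_exp m n j k : (m <= n)%N -> (j <= k)%N -> m.+1%:R ^+ j <= n.+1%:R ^+ k :> C.
Proof.
move=> le_mn le_jk; rewrite -!natrX ler_nat.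
apply: leq_trans (leq_pexp2l (ltn0Sn n) le_jk).
by case: j {le_jk} => // j; rewrite leq_exp2r.
Qed.

Lemma pow_bounded_le c j k : (j <= k)%N -> pow_bounded c j -> pow_bounded c k.
Proof.
move=> le_jk [K K_ge0 cK]; exists K => // n.
by rewrite (le_trans (cK n)) // ler_wpM2l // ler_natS_exp.
Qed.

Lemma eq_pow_bounded c w k : (forall n, c n = w n) -> pow_bounded c k -> pow_bounded w k.
Proof. by move=> eq_cw [K K_ge0 cK]; exists K => // n; rewrite -eq_cw. Qed.

Lemma pow_bounded_coef A : pow_bounded (fun n => A`_n) 0.
Proof.
exists (l1norm A) => [|n]; first exact: sumr_ge0.
rewrite expr0 mulr1 (le_trans _ (sum_norm_coef_le A n.+1)) //.
by rewrite big_ord_recr lerDr sumr_ge0.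
Qed.

Lemma pow_boundedD c w k :
  pow_bounded c k -> pow_bounded w k -> pow_bounded (fun n => c n + w n) k.
Proof.
move=> [K K_ge0 cK] [L L_ge0 wL]; exists (K + L) => [|n]; first exact: addr_ge0.
by rewrite mulrDl (le_trans (ler_normD _ _)) ?lerD.
Qed.

Lemma pow_boundedZ x c k : pow_bounded c k -> pow_bounded (fun n => x * c n) k.
Proof.
move=> [K K_ge0 cK]; exists (`|x| * K) => [|n]; first by rewrite mulr_ge0.
by rewrite normrM -mulrA ler_wpM2l.
Qed.

Lemma pow_bounded_pconv a c k : pow_bounded c k -> pow_bounded (pconv a c) k.
Proof.
move=> [K K_ge0 cK]; exists (l1norm a * K) => [|n]; first by rewrite mulr_ge0 ?sumr_ge0.
rewrite (le_trans (ler_norm_sum _ _ _)) //.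
apply: (@le_trans _ _ (\sum_(i < n.+1) `|a`_i| * (K * n.+1%:R ^+ k))).
  apply: ler_sum => i _; rewrite normrM ler_wpM2l // (le_trans (cK _)) //.
  by rewrite ler_wpM2l // ler_natS_exp ?leq_subr.
rewrite -mulr_suml -mulrA ler_wpM2r ?sum_norm_coef_le //.
by rewrite mulr_ge0 // exprn_ge0.
Qed.

Lemma pconvXsubC_bound z c c' : 1 <= `|z| ->
  (forall n, pconv ('X - z%:P) c n = c' n) -> forall n, `|c n| <= \sum_(i < n.+1) `|c' i|.
Proof.
move=> z_ge1 Xz_c; have Xz_cE n : c' n = (if n is n'.+1 then c n' else 0) - z * c n.
  by rewrite -Xz_c pconvB pconvX pconvC.
elim=> [|n IHn]; first by rewrite big_ord1 Xz_cE sub0r normrN normrM ler_peMl.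
have zcE : z * c n.+1 = c n - c' n.+1 by rewrite Xz_cE opprB addrC subrK.
rewrite big_ord_recr (le_trans (ler_peMl _ z_ge1)) // -normrM zcE.
by rewrite (le_trans (ler_normB _ _)) ?lerD.
Qed.

Lemma pow_bounded_XsubC_exp z j A c : 1 <= `|z| ->
  (forall n, pconv (('X - z%:P) ^+ j.+1) c n = A`_n) -> pow_bounded c j.
Proof.
move=> z_ge1; elim: j c => [|j IHj] c Xz_c.
  exists (l1norm A) => [|n]; first exact: sumr_ge0.
  rewrite expr0 mulr1 (le_trans _ (sum_norm_coef_le A n.+1)) //.
  by apply: (pconvXsubC_bound z_ge1) => m; rewrite -Xz_c expr1.
have [K K_ge0 cK] : pow_bounded (pconv ('X - z%:P) c) j.
  by apply: IHj => n; rewrite -pconvM -exprSr.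
exists K => // n; rewrite (le_trans (pconvXsubC_bound z_ge1 (fun _ => erefl) n)) //.
apply: (@le_trans _ _ (\sum_(i < n.+1) K * n.+1%:R ^+ j)).
  apply: ler_sum => i _; rewrite (le_trans (cK i)) // ler_wpM2l //.
  exact: ler_natS_exp (ltnSE (ltn_ord i)) (leqnn j).
by rewrite sumr_const card_ord exprSr mulrA mulr_natr.
Qed.

End Growth.

Lemma pow_bounded_coprime (C : numFieldType) (U V : {poly C}) c k : coprimep U V ->
  pow_bounded (pconv U c) k -> pow_bounded (pconv V c) k -> pow_bounded c k.
Proof.
move=> /Bezout_eq1_coprimepP[[u v] /= Bezout] Uc_bd Vc_bd.
apply: (@eq_pow_bounded _ (fun n => pconv u (pconv U c) n + pconv v (pconv V c) n)).
  by move=> n; rewrite -!pconvM -pconvD Bezout pconv1.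
by apply: pow_boundedD; apply: pow_bounded_pconv.
Qed.

Lemma mup_factor (F : fieldType) (B : {poly F}) z : B != 0 ->
  exists2 V, B = V * ('X - z%:P) ^+ mup z B & ~~ root V z.
Proof.
move=> B_neq0; have [m [V /implyP/(_ B_neq0) Vz eqB]] := multiplicity_XsubC B z.
by exists V; rewrite // {2}eqB mupMr // mup_XsubCX eqxx.
Qed.

Lemma pow_bounded_of_roots (C : numClosedFieldType) (B : {poly C}) k : B != 0 ->
  (forall z, root B z -> 1 <= `|z|) -> (forall z, (mup z B <= k.+1)%N) ->
  forall (A : {poly C}) c, (forall n, pconv B c n = A`_n) -> pow_bounded c k.
Proof.
have [N] := ubnP (size B); elim: N B => // N IHN B /ltnSE szB B_neq0 roots_ge1 mupB A c Bc.
have [/closed_rootP[z Bz] | /negPn/eqP szB1] := boolP (size B != 1); last first.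
  have eqB : B = (B`_0)%:P by apply: size1_polyC; rewrite szB1.
  have B0_neq0 : B`_0 != 0 by apply: contra B_neq0 => /eqP B0; rewrite eqB B0.
  apply: (pow_bounded_le (leq0n k)).
  apply: (@eq_pow_bounded _ (fun n => (B`_0)^-1 * A`_n)).
    by move=> n; rewrite -Bc [in pconv B]eqB pconvC mulKf.
  exact: pow_boundedZ _ (pow_bounded_coef A).
have [V eqB Vz] := mup_factor z B_neq0.
have : (0 < mup z B)%N by rewrite -XsubC_dvd // dvdp_XsubCl.
move: (mupB z) eqB; case: (mup z B) => // j le_jk eqB _.
set U := ('X - z%:P) ^+ j.+1 in eqB.
have [V_neq0 U_neq0] : V != 0 /\ U != 0 by apply/andP; rewrite -negb_or -mulf_eq0 -eqB.
have Uc_bd : pow_bounded (pconv U c) k.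
  apply: (IHN V _ V_neq0 _ _ A) => [|w Vw|w|n]; last by rewrite -pconvM -eqB.
  - apply: leq_trans szB; rewrite eqB size_mul // size_exp_XsubC !addnS /=.
    by rewrite ltnS leq_addr.
  - by apply: roots_ge1; rewrite eqB rootM Vw.
  - by rewrite (leq_trans _ (mupB w)) // eqB mupM // leq_addr.
have Vc_bd : pow_bounded (pconv V c) k.
  apply: pow_bounded_le (ltnSE le_jk) _; apply: (pow_bounded_XsubC_exp (A := A) (roots_ge1 z Bz)).
  by move=> n; rewrite -pconvM mulrC -eqB.
apply: pow_bounded_coprime Uc_bd Vc_bd.
by rewrite coprimep_expl // coprimep_sym coprimep_XsubC.
Qed.

Lemma bin_le_expS n j : ('C(n + j, j) <= n.+1 ^ j)%N.
Proof.
elim: j => [|j IHj]; first by rewrite bin0.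
have := mul_bin_diag (n + j).+1 j; rewrite /= -addnS => binSE.
rewrite -(leq_pmul2l (ltn0Sn j)) -binSE expnS mulnA.
by apply: leq_mul IHj; nia.
Qed.

Lemma expS_le_bin_fact n j : (n.+1 ^ j <= 'C(n + j, j) * j`!)%N.
Proof.
elim: j => [|j IHj]; first by rewrite bin0.
have := mul_bin_diag (n + j).+1 j; rewrite /= -addnS => binSE.
rewrite factS mulnCA mulnA -binSE -mulnA expnS.
by apply: leq_mul IHj; rewrite addnS ltnS leq_addr.
Qed.

Section NegativeBinomial.
Variable R : nzRingType.
Implicit Types (c : nat -> R).

(* [nbinom j] is the coefficient sequence of [(1 - t)^-(j+1)]. *)
Definition nbinom j n : R := 'C(n + j, j)%:R.

Definition psum c N := \sum_(n < N.+1) c n.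

Lemma pconv_1subX c n : pconv (1 - 'X) c n = c n - (if n is n'.+1 then c n' else 0).
Proof. by rewrite pconvB pconv1 pconvX. Qed.

Lemma pconv_1subX_psum c n : pconv (1 - 'X) (psum c) n = c n.
Proof.
rewrite pconv_1subX; case: n => [|n]; first by rewrite /psum big_ord1 subr0.
by rewrite /psum big_ord_recr /= addrAC subrr add0r.
Qed.

Lemma pconv_1subX_inj c w :
  (forall n, pconv (1 - 'X) c n = pconv (1 - 'X) w n) -> forall n, c n = w n.
Proof.
move=> eq_cw; elim=> [|n IHn]; first by have := eq_cw 0; rewrite !pconv_1subX !subr0.
by have := eq_cw n.+1; rewrite !pconv_1subX IHn => /subIr.
Qed.

Lemma pconv_1subX_nbinomS j n : pconv (1 - 'X) (nbinom j.+1) n = nbinom j n.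
Proof.
rewrite pconv_1subX /nbinom; case: n => [|n]; first by rewrite !add0n !binn subr0.
by rewrite addSn binS natrD addrAC subrr add0r addnS.
Qed.

Lemma pconv_1subX_exp_nbinom j n : pconv ((1 - 'X) ^+ j.+1) (nbinom j) n = (1 : {poly R})`_n.
Proof.
elim: j n => [|j IHj] n.
  by rewrite expr1 pconv_1subX /nbinom coef1; case: n => [|n]; rewrite ?subr0 ?bin0 ?subrr.
by rewrite exprSr pconvM -IHj; apply: eq_pconv => i _; apply: pconv_1subX_nbinomS.
Qed.

End NegativeBinomial.
Arguments nbinom {R} j n.

Lemma psum_pconv (R : comNzRingType) (q : {poly R}) c N :
  psum (pconv q c) N = pconv q (psum c) N.
Proof.
apply: pconv_1subX_inj => {}N; rewrite pconv_1subX_psum -pconvM mulrC pconvM.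
by apply: eq_pconv => i _; rewrite pconv_1subX_psum.
Qed.

Lemma pow_bounded_nbinom (C : numDomainType) j : pow_bounded (@nbinom C j) j.
Proof.
exists 1 => // n; rewrite mul1r -natrX ger0_norm ?ler0n //.
by rewrite ler_nat bin_le_expS.
Qed.

Lemma pow_bounded_pconv_nbinom (C : numDomainType) (q : {poly C}) j :
  pow_bounded (fun n => pconv q (nbinom j.+1) n - q.[1] * nbinom j.+1 n) j.
Proof.
have /factor_theorem[q' eq_q] : root (q - q.[1]%:P) 1 by rewrite /root !hornerE subrr.
apply: (@eq_pow_bounded _ (fun n => - 1 * pconv q' (nbinom j) n)); last first.
  exact: pow_boundedZ _ (pow_bounded_pconv _ (pow_bounded_nbinom _ j)).
move=> n; rewrite mulN1r; set a := q.[1].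
have -> : q = a%:P - q' * (1 - 'X).
  by rewrite -[1 - 'X]opprB mulrN opprK -polyC1 -eq_q addrC subrK.
rewrite pconvB pconvC pconvM addrAC subrr add0r.
by congr (- _); apply: eq_pconv => i _; rewrite pconv_1subX_nbinomS.
Qed.

Lemma pow_bounded_psum_pconv (C : numDomainType) (q : {poly C}) (c : nat -> C) al m :
  pow_bounded (fun n => psum c n - al * nbinom m.+1 n) m ->
  pow_bounded (fun n => psum (pconv q c) n - al * q.[1] * nbinom m.+1 n) m.
Proof.
set x := fun n => _ - _ => x_bd.
apply: (@eq_pow_bounded _
  (fun n => pconv q x n + al * (pconv q (nbinom m.+1) n - q.[1] * nbinom m.+1 n))).
  move=> n; rewrite psum_pconv (@eq_pconv _ q (psum c) (fun i => al * nbinom m.+1 i + x i)).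
    by rewrite [in RHS]pconv_seqD [in RHS]pconv_seqZ; ring.
  by move=> i _; rewrite /x addrC subrK.
apply: pow_boundedD; first exact: pow_bounded_pconv.
exact: pow_boundedZ _ (pow_bounded_pconv_nbinom _ _).
Qed.

Lemma root1_factor (F : fieldType) (Q : {poly F}) : Q != 0 ->
  exists2 W, Q = W * (1 - 'X) ^+ mup 1 Q & W.[1] != 0.
Proof.
move=> Q_neq0; have [V eqQ V1] := mup_factor 1 Q_neq0.
exists ((-1) ^+ mup 1 Q *: V); last by rewrite hornerZ mulf_neq0 ?signr_eq0.
by rewrite {1}eqQ -scalerAl scalerAr -exprZn scaleN1r opprB polyC1.
Qed.

Lemma psum_taylor_nbinom_bound (C : numClosedFieldType) (P Q : {poly C}) gn :
  P.[1] != 0 -> (forall z, `|z| < 1 -> ~~ root Q z) -> root Q 1 ->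
  (forall z, (mup z Q <= mup 1 Q)%N) -> taylor_coefs P Q gn ->
  exists m al, al != 0 /\ pow_bounded (fun n => psum gn n - al * nbinom m.+1 n) m.
Proof.
move=> P1_neq0 Q_disk Q1 mupQ Q_gn.
have Q_neq0 : Q != 0.
  by apply: contraTneq (Q_disk 0 ltac:(by rewrite normr0)) => ->; rewrite root0.
have [W eqQ W1_neq0] := root1_factor Q_neq0.
have [m mupQ1] : exists m, mup 1 Q = m.+1.
  by case: (mup 1 Q) (XsubC_dvd 1 Q_neq0) => [|m]; [rewrite dvdp_XsubCl Q1 | exists m].
rewrite mupQ1 in eqQ mupQ; set al := P.[1] / W.[1].
exists m, al; split; first by rewrite mulf_neq0 ?invr_eq0.
set x := fun n => _ - _.
(* (1 - t) Q x = P - al W is a polynomial vanishing at 1, so Q x is a polynomial. *)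
have QXx n : pconv ((1 - 'X) * Q) x n = (P - al *: W)`_n.
  rewrite pconv_seqB pconv_seqZ coefB coefZ; congr (_ - al * _).
    rewrite mulrC pconvM -Q_gn; apply: eq_pconv => i _; exact: pconv_1subX_psum.
  rewrite eqQ mulrCA -exprS pconvM -[in RHS](mulr1 W) -pconv_coef.
  by apply: eq_pconv => i _; rewrite pconv_1subX_exp_nbinom.
have /factor_theorem[F eqF] : root (P - al *: W) 1 by rewrite /root !hornerE divfK ?subrr.
apply: (@pow_bounded_of_roots _ Q m Q_neq0 _ mupQ (- F)) => [z Qz|].
  by rewrite real_leNgt ?real1 ?normr_real //; apply: contraL Qz; apply: Q_disk.
apply: pconv_1subX_inj => n; rewrite -pconvM QXx pconv_coef eqF polyC1.
by rewrite mulrN -mulNr opprB mulrC.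
Qed.

Local Open Scope classical_set_scope.

Lemma cvg_horner (K : numFieldType) {T} (F : set_system T) {FF : Filter F}
    (f : T -> K) (a : K) (p : {poly K}) :
  (f : T -> K^o) @ F --> (a : K^o) -> (fun t => p.[f t] : K^o) @ F --> (p.[a] : K^o).
Proof.
move=> fa; elim/poly_ind: p => [|p c IHp].
  by under eq_fun do rewrite horner0; rewrite horner0; exact: cvg_cst.
under eq_fun do rewrite hornerMXaddC; rewrite hornerMXaddC.
exact: cvgD (cvgM IHp fa) (cvg_cst _).
Qed.

Lemma cvg_div_sub (K : numFieldType) {T} (F : set_system T) {FF : Filter F}
    (w e : T -> K) (a : K) : (forall t, e t != 0) ->
  (fun t => (w t - a * e t) / e t : K^o) @ F --> (0 : K^o) ->
  (fun t => w t / e t : K^o) @ F --> (a : K^o).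
Proof.
move=> e_neq0 w_cvg; rewrite -[X in _ --> X]addr0.
have -> : (fun t => w t / e t : K^o) = (fun t => a + (w t - a * e t) / e t : K^o).
  by apply/funext => t; rewrite mulrBl mulfK // addrC subrK.
exact: (cvgD (cvg_cst _) w_cvg).
Qed.

Lemma cvg_ratio (K : numFieldType) {T} (F : set_system T) {FF : Filter F}
    (u v e : T -> K) (a b : K) : (forall t, e t != 0) ->
  (fun t => u t / e t : K^o) @ F --> (a : K^o) ->
  (fun t => v t / e t : K^o) @ F --> (b : K^o) -> b != 0 ->
  (\forall t \near F, v t != 0) /\ (fun t => u t / v t : K^o) @ F --> (a / b : K^o).
Proof.
move=> e_neq0 ua vb b_neq0; split.
  near=> t; have : v t / e t != 0 by near: t; exact: cvgr_neq0 vb b_neq0.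
  by apply: contraNneq => ->; rewrite mul0r.
have -> : (fun t => u t / v t : K^o) = (fun t => u t / e t) \* (fun t => (v t / e t)^-1).
  by apply/funext => t /=; rewrite invf_div mulrA divfK.
exact: cvgM ua (cvgV b_neq0 vb).
Unshelve. all: by end_near. Qed.

Section ComplexLimits.
Variable R : realType.
Local Open Scope complex_scope.

Lemma realC_lt_nat (x : R[i]) : x \is Num.real -> exists N : nat, x < N%:R.
Proof.
case/complex_realP => k ->; exists (Num.truncn k).+1.
by rewrite -(rmorph_nat (real_complex R)) ltcR truncnS_gt.
Qed.

Lemma normC_real (k : R) : `|k%:C| = `|k|%:C.
Proof. by rewrite normc_def /= expr0n /= addr0 sqrtr_sqr. Qed.

Lemma cvg0_harmonic_bound (u : nat -> R[i]) (L : R[i]) : 0 <= L ->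
  (forall N, `|u N| <= L / N.+1%:R) -> (u : nat -> R[i]^o) @ \oo --> 0.
Proof.
move=> L_ge0 uL; apply/cvgr0Pnorm_le => eps eps_gt0.
have [N0 LN0] : exists N : nat, L / eps < N%:R.
  by apply: realC_lt_nat; rewrite rpredM ?rpredV ?ger0_real ?(ltW eps_gt0).
exists N0 => // N /= le_N0N; rewrite (le_trans (uL N)) // ler_pdivrMr ?ltr0Sn //.
rewrite ltr_pdivrMr // in LN0; rewrite (le_trans (ltW LN0)) // mulrC ler_wpM2l ?(ltW eps_gt0) //.
by rewrite ler_nat leqW.
Qed.

Lemma cvg_pow_bounded_div_nbinom (r : nat -> R[i]) m : pow_bounded r m ->
  (fun N => r N / nbinom m.+1 N : R[i]^o) @ \oo --> 0.
Proof.
move=> [K K_ge0 rK]; apply: (@cvg0_harmonic_bound _ (K * (m.+1)`!%:R)) => [|N].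
  by rewrite mulr_ge0.
have E_gt0 : 0 < nbinom m.+1 N :> R[i] by rewrite ltr0n bin_gt0 leq_addl.
rewrite normrM normfV (gtr0_norm E_gt0) ler_pdivrMr // (le_trans (rK N)) //.
rewrite -!mulrA ler_wpM2l // mulrCA mulrC ler_pdivlMr ?ltr0Sn // -exprSr mulrC.
by rewrite -natrX -natrM ler_nat expS_le_bin_fact.
Qed.

Lemma cvg_pow_bounded_ratio (u v : nat -> R[i]) (al p1 q1 : R[i]) m :
  al != 0 -> q1 != 0 ->
  pow_bounded (fun N => u N - al * p1 * nbinom m.+1 N) m ->
  pow_bounded (fun N => v N - al * q1 * nbinom m.+1 N) m ->
  (\forall N \near \oo, v N != 0) /\ (fun N => u N / v N : R[i]^o) @ \oo --> (p1 / q1 : R[i]^o).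
Proof.
move=> al_neq0 q1_neq0 u_bd v_bd.
have E_neq0 N : nbinom m.+1 N != 0 :> R[i] by rewrite pnatr_eq0 -lt0n bin_gt0 leq_addl.
have div_cvg (w : nat -> R[i]) x : pow_bounded (fun N => w N - al * x * nbinom m.+1 N) m ->
    (fun N => w N / nbinom m.+1 N : R[i]^o) @ \oo --> (al * x : R[i]^o).
  move=> w_bd; apply: (@cvg_div_sub R[i] _ _ _ w (nbinom m.+1) (al * x) E_neq0).
  exact: cvg_pow_bounded_div_nbinom w_bd.
have [v_neq0 uv] := cvg_ratio (FF := eventually_filter) E_neq0
  (div_cvg _ _ u_bd) (div_cvg _ _ v_bd) (mulf_neq0 al_neq0 q1_neq0).
split; first exact: v_neq0.
suff -> : p1 / q1 = al * p1 / (al * q1) by exact: uv.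
by rewrite invfM mulrACA mulfV ?mul1r.
Qed.

Lemma cvg_realC (x : R) : (fun t : R => (t%:C : R[i]^o)) @ x --> (x%:C : R[i]^o).
Proof.
apply/cvgrPdist_lt => eps eps_gt0.
have [k eps_eq] : exists k, eps = k%:C by apply/complex_realP; rewrite gtr0_real.
rewrite eps_eq ltcR in eps_gt0; rewrite eps_eq.
near=> t; rewrite -rmorphB normC_real ltcR.
by near: t; exact: (@cvgr_dist_lt _ R^o _ _ _ id x cvg_id k eps_gt0).
Unshelve. all: by end_near. Qed.

Lemma cvg_horner_left1 (p : {poly R[i]}) :
  (fun t : R => p.[t%:C] : R[i]^o) @ (1 : R)^'- --> (p.[1] : R[i]^o).
Proof.
apply: cvg_at_left_filter; have -> : 1 = 1%:C :> R[i] by rewrite rmorph1.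
apply: cvg_horner; exact: cvg_realC.
Qed.

Lemma near_left1_horner_neq0 (p : {poly R[i]}) : p.[1] != 0 ->
  \forall t \near (1 : R)^'-, p.[t%:C] != 0.
Proof. by move=> p1_neq0; exact: (cvgr_neq0 _ (@cvg_horner_left1 p) p1_neq0). Qed.

Lemma near_left1_normC_lt1 : \forall t \near (1 : R)^'-, `|t%:C| < 1 :> R[i].
Proof.
near=> t; rewrite normC_real -(rmorph1 (real_complex R)) ltcR ger0_norm.
  by near: t; exact: nbhs_left_lt.
by near: t; exact: nbhs_left_ge.
Unshelve. all: by end_near. Qed.

End ComplexLimits.

Unset Implicit Arguments.
Local Open Scope complex_scope.

Theorem mainTheorem9 (R : realType) (P Q p q : {poly R[i]}) (gn : nat -> R[i]) :
  coprimep P Q ->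
  (forall z : R[i], `|z| < 1 -> ~~ root Q z) ->
  root Q 1 ->
  (forall z : R[i], (mup z Q <= mup 1 Q)%N) ->
  q.[1] != 0 ->
  taylor_coefs P Q gn ->
  let g := fun z : R[i] => P.[z] / Q.[z] in
  let s := fun t : R => p.[t%:C] * g t%:C in
  let d := fun t : R => q.[t%:C] * g t%:C in
  let sn := pconv p gn in
  let dn := pconv q gn in
  [/\ (\forall t \near 1^'-, d t != 0),
      (fun t => (s t / d t : R[i]^o)) @ 1^'- --> (p.[1] / q.[1] : R[i]^o),
      (\forall N \near \oo, \sum_(n < N.+1) dn n != 0) &
      (fun N : nat => ((\sum_(n < N.+1) sn n) / (\sum_(n < N.+1) dn n) : R[i]^o))
        @ \oo --> (p.[1] / q.[1] : R[i]^o)].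
Proof.
move=> coPQ Q_disk Q1 mupQ q1_neq0 Q_gn g s d sn dn.
have P1_neq0 : P.[1] != 0 by apply: coprimep_root Q1; rewrite coprimep_sym.
have [m [al [al_neq0 gn_bd]]] := psum_taylor_nbinom_bound P1_neq0 Q_disk Q1 mupQ Q_gn.
have [dn_neq0 sd_cvg] := cvg_pow_bounded_ratio al_neq0 q1_neq0
  (pow_bounded_psum_pconv p gn_bd) (pow_bounded_psum_pconv q gn_bd).
have g_neq0 : \forall t \near (1 : R)^'-, g t%:C != 0.
  near=> t; rewrite mulf_neq0 ?invr_eq0 //; first by near: t; exact: near_left1_horner_neq0.
  by apply: Q_disk; near: t; exact: near_left1_normC_lt1.
split.
- near=> t; rewrite mulf_neq0 //; near: t; last exact: g_neq0.
  exact: near_left1_horner_neq0.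
- apply: cvg_trans (cvgM (@cvg_horner_left1 _ p) (cvgV q1_neq0 (@cvg_horner_left1 _ q))).
  apply: near_eq_cvg; near=> t => /=.
  rewrite /s /d invfM mulrACA mulfV ?mulr1 //.
  by near: t; exact: g_neq0.
- exact: dn_neq0.
- exact: sd_cvg.
Unshelve. all: by end_near. Qed.
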